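(* Let $G$ be a nontrivial finite subgroup of $\mathrm{SO}(3)$ and let $g:\mathrm{SO}(3)\to\mathbb{R}^n$ be an embedding. Then there does not exist a continuous function $f:\mathrm{SO}(3)/G\to g[\mathrm{SO}(3)]$ such that $p_G(g^{-1}(f(\mathcal{R})))=\mathcal{R}$ for every $\mathcal{R}\in\mathrm{SO}(3)/G$.
   Context: $\mathrm{SO}(3)/G$ denotes the space of left cosets $RG$ ($R\in\mathrm{SO}(3)$) with the quotient topology, and $p_G:\mathrm{SO}(3)\to\mathrm{SO}(3)/G$, $R\mapsto RG$, is the quotient map. An embedding is a continuous injective map that is a homeomorphism onto its image $g[\mathrm{SO}(3)]$. *)

From HB Require Import structures.
From mathcomp Require Import all_boot all_order all_algebra generic_quotient.
From mathcomp Require Import all_classical all_reals all_analysis.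
Set Implicit Arguments. Unset Strict Implicit. Unset Printing Implicit Defensive.
Import Order.TTheory GRing.Theory Num.Theory.
Import numFieldNormedType.Exports.
Local Open Scope classical_set_scope.
Local Open Scope ring_scope.
Local Open Scope quotient_scope.

Definition SO3set (R : realType) : set 'M[R]_3 :=
  [set M | M *m M^T = 1%:M /\ \det M = 1].

(* SO(3) as a topological space: the subspace (initial) topology on the
   subtype, inherited from the Euclidean topology of 'M[R]_3. *)
Notation SO3 R := (set_type (@SO3set R)).

Record finSubgroupSO3 (R : realType) := FinSubgroupSO3 {
  fsg_set :> set 'M[R]_3;
  fsg_finite : finite_set fsg_set;
  fsg_sub : fsg_set `<=` @SO3set R;
  fsg_one : fsg_set 1%:M;
  fsg_mul : forall A B, fsg_set A -> fsg_set B -> fsg_set (A *m B);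
  fsg_inv : forall A, fsg_set A -> fsg_set (invmx A) }.

Section coset.
Variables (R : realType) (G : finSubgroupSO3 R).

(* x ~ y  iff  y G = x G  iff  x^{-1} y \in G *)
Definition coset_rel (x y : SO3 R) : bool :=
  `[< fsg_set G (invmx (val x) *m val y) >].

Lemma SO3_unit (x : SO3 R) : val x \in unitmx.
Proof.
case: x => M /= /set_mem [_ dM]. by rewrite unitmxE dM unitr1.
Qed.

Lemma coset_rel_refl : reflexive coset_rel.
Proof.
move=> x; apply/asboolP; rewrite mulVmx ?SO3_unit //; exact: fsg_one.
Qed.

Lemma coset_rel_sym : symmetric coset_rel.
Proof.
suff H : forall x y, coset_rel x y -> coset_rel y x.
  by move=> x y; apply/idP/idP; apply: H.
move=> x y /asboolP Gxy; apply/asboolP.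
have PQ : (invmx (val x) *m val y) *m (invmx (val y) *m val x) = 1%:M.
  by rewrite -mulmxA (mulmxA (val y)) mulmxV ?SO3_unit // mul1mx mulVmx ?SO3_unit.
have uP : invmx (val x) *m val y \in unitmx by case: (mulmx1_unit PQ).
have := fsg_inv Gxy.
by rewrite -[invmx (_ *m _)]mulmx1 -PQ mulmxA mulVmx // mul1mx.
Qed.

Lemma coset_rel_trans : transitive coset_rel.
Proof.
move=> y x z /asboolP Gxy /asboolP Gyz; apply/asboolP.
have := fsg_mul Gxy Gyz.
by rewrite -mulmxA (mulmxA (val y)) mulmxV ?SO3_unit // mul1mx.
Qed.

Canonical coset_equiv := EquivRel coset_rel coset_rel_refl coset_rel_sym
  coset_rel_trans.

Definition SO3modG : Type := quotient_topology {eq_quot coset_equiv}.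

Definition pG : SO3 R -> SO3modG := \pi_SO3modG.

End coset.

(* An embedding: continuous, injective, homeomorphism onto its image
   g[SO(3)] = range g (with the subspace topology). *)
Definition embedding (X Y : topologicalType) (g : X -> Y) : Prop :=
  [/\ continuous g, injective g &
      exists h : set_type (range g) -> X,
        continuous h /\ (forall y, g (h y) = val y)].

From HB Require Import structures.
From mathcomp Require Import all_boot all_order all_algebra generic_quotient.
From mathcomp Require Import all_classical all_reals all_analysis.
From mathcomp Require Import ring lra.
Set Implicit Arguments. Unset Strict Implicit. Unset Printing Implicit Defensive.
Import Order.TTheory GRing.Theory Num.Theory.
Import numFieldNormedType.Exports.
Local Open Scope classical_set_scope.
Local Open Scope ring_scope.
Local Open Scope quotient_scope.

(* Composing f with the inverse of the embedding g gives a continuous section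
   s of p_G, hence a continuous map F x = x^-1 s (p_G x) from SO(3) into the
   finite group G.  SO(3) is path connected: every rotation is a product of two
   Cayley transforms (1 - K)(1 + K)^-1 of skew matrices K, and t |-> Cayley
   transform of tK joins 1 to each of them.  So F is constant, whereas
   F A = A^-1 F 1 for A in G; hence G is trivial. *)

Section cayley_transform.
Variables (R : comUnitRingType) (n : nat).
Implicit Types A M : 'M[R]_n.

Lemma skew_trmx1D A : A^T = - A -> (1%:M + A)^T = 1%:M - A.
Proof. by move=> skA; rewrite linearD /= trmx1 skA. Qed.

Lemma cayley_orthogonal A M : A^T = - A -> 1%:M + A \in unitmx ->
  M *m (1%:M + A) = 1%:M - A -> M *m M^T = 1%:M /\ \det M = 1.
Proof.
move=> skA uA MA.
have uB : 1%:M - A \in unitmx by rewrite -skew_trmx1D // unitmx_tr.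
have BMt : (1%:M - A) *m M^T = 1%:M + A.
  by rewrite -skew_trmx1D // -trmx_mul MA linearB /= trmx1 skA opprK.
have comm : (1%:M + A) *m (1%:M - A) = (1%:M - A) *m (1%:M + A).
  rewrite mulmxDl mulmxBl !mul1mx mulmxBr mulmxDr !mulmx1.
  by apply/matrixP => i j; rewrite !mxE; ring.
split.
  apply: mulmx1C; apply: (can_inj (mulKmx uB)); apply: (can_inj (mulmxK uA)).
  by rewrite mulmx1 !mulmxA BMt -mulmxA MA comm.
have := congr1 determinant MA; rewrite det_mulmx -skew_trmx1D // det_tr.
have ud : \det (1%:M + A) \is a GRing.unit by rewrite -unitmxE.
by rewrite -{2}[\det (1%:M + A)]mul1r => /(mulIr ud).
Qed.

End cayley_transform.

Section orthogonal_cayley.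
Variables (R : numFieldType) (n : nat).
Implicit Types X : 'M[R]_n.

Lemma orthogonal_cayley X : X^T *m X = 1%:M -> 1%:M + X \in unitmx ->
  exists K, [/\ K^T = - K, 1%:M + K \in unitmx & X *m (1%:M + K) = 1%:M - K].
Proof.
move=> XtX uU; set U := 1%:M + X in uU *.
have uUt : U^T \in unitmx by rewrite unitmx_tr.
set K := (1%:M - X) *m invmx U.
have KU : K *m U = 1%:M - X by rewrite mulmxKV.
have DK : 1%:M + K = 2 *: invmx U.
  apply: (can_inj (mulmxK uU)); rewrite mulmxDl KU mul1mx -scalemxAl mulVmx //.
  by apply/matrixP => i j; rewrite !mxE; ring.
have BK : 1%:M - K = (2 *: X) *m invmx U.
  apply: (can_inj (mulmxK uU)); rewrite mulmxBl KU mul1mx mulmxKV //.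
  by apply/matrixP => i j; rewrite !mxE; ring.
exists K; split.
- apply: (can_inj (mulKmx uUt)); apply: (can_inj (mulmxK uU)).
  rewrite -trmx_mul KU mulmxN mulNmx -mulmxA KU /U.
  rewrite !linearD /= !linearN /= trmx1 !mulmx1 mulmxBl mulmxDl mul1mx XtX.
  by apply/matrixP => i j; rewrite !mxE; ring.
- by rewrite DK unitmxZ ?unitmx_inv // unitfE pnatr_eq0.
- by rewrite DK BK -scalemxAr -scalemxAl scalemxAl.
Qed.

End orthogonal_cayley.

(* Entries [A (Ordinal p) j] with different proofs [p] are distinct atoms for
   [ring] and [lra]; rewriting with [mx3_fun] identifies them. *)
Lemma mx3_fun (R : Type) (A : 'M[R]_3) :
  exists f : nat -> nat -> R, forall i j : 'I_3, A i j = f i j.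
Proof.
exists (fun i j => A (insubd ord0 i) (insubd ord0 j)) => i j.
by rewrite !valKd.
Qed.

Ltac mx3_ext := apply/matrixP => -[[|[|[|//]]] ?] -[[|[|[|//]]] ?];
  rewrite !(mxE, big_ord_recl, big_ord0) /=.

Section SO3_algebra.
Variable R : realType.
Implicit Types X Y : 'M[R]_3.

Lemma SO3set_trmx_mulmx X : SO3set X -> X^T *m X = 1%:M.
Proof. by case=> /mulmx1C. Qed.

Lemma SO3set_mul X Y : SO3set X -> SO3set Y -> SO3set (X *m Y).
Proof.
move=> [XXt dX] [YYt dY]; split; last by rewrite det_mulmx dX dY mulr1.
by rewrite trmx_mul mulmxA -(mulmxA X) YYt mulmx1 XXt.
Qed.

Lemma SO3set_tr X : SO3set X -> SO3set X^T.
Proof. by move=> SX; split; rewrite ?trmxK ?det_tr; case: SX => // /mulmx1C. Qed.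

Lemma invmx_SO3set X : SO3set X -> invmx X = X^T.
Proof.
move=> SX; have uX : X \in unitmx by case: SX => _ dX; rewrite unitmxE dX unitr1.
by apply: (can_inj (mulmxK uX)); rewrite mulVmx // SO3set_trmx_mulmx.
Qed.

(* det (1 + X) = 1 + tr X + tr (adj X) + det X, and adj X = X^T on SO(3). *)
Lemma det_1D_SO3 X : SO3set X -> \det (1%:M + X) = 2 * (1 + \tr X).
Proof.
move=> SX; have [_ detX] := SX.
have adjX : \adj X = X^T.
  by rewrite -[\adj X]mul1mx -(SO3set_trmx_mulmx SX) -mulmxA mul_mx_adj detX mulmx1.
have cof (i : 'I_3) : cofactor X i i = X i i.
  by have := congr1 (fun M : 'M[R]_3 => M i i) adjX; rewrite !mxE.
have := cof ord0; have := cof (lift ord0 ord0); have := cof (lift ord0 (lift ord0 ord0)).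
move: detX; rewrite /mxtrace.
do 3 rewrite ?(expand_det_row _ ord0) /cofactor ?(big_ord_recl, big_ord0, det_mx00).
have [f Xf] := mx3_fun X.
by rewrite !(mxE, Xf) /bump /=; lra.
Qed.

Lemma SO3_unitmx1D X : SO3set X -> (1%:M + X \in unitmx) = (\tr X != -1).
Proof.
move=> SX; rewrite unitmxE unitfE det_1D_SO3 // mulf_eq0 pnatr_eq0 /=.
by rewrite addrC addr_eq0.
Qed.

End SO3_algebra.

Section cayley3.
Variable R : realType.
Implicit Types (a b c t : R) (X K : 'M[R]_3).

(* The matrix of v |-> (a, b, c) x v. *)
Definition skew3 a b c : 'M[R]_3 := \matrix_(i, j)
  match nat_of_ord i, nat_of_ord j with
  | 0, 1 => - c | 0, 2 => b | 1, 0 => c | 1, 2 => - a | 2, 0 => - b | 2, 1 => a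
  | _, _ => 0
  end.

(* (1 - tK) (1 + tK)^-1 for K = skew3 a b c, written without the inverse
   thanks to K^3 = - (a^2 + b^2 + c^2) K. *)
Definition cayley3 a b c t : 'M[R]_3 :=
  let K := skew3 a b c in
  1%:M - (2 * t / (1 + t ^+ 2 * (a ^+ 2 + b ^+ 2 + c ^+ 2))) *: (K - t *: (K *m K)).

Lemma skew3_tr a b c : (skew3 a b c)^T = - skew3 a b c.
Proof. by mx3_ext; rewrite ?oppr0 ?opprK. Qed.

Lemma skew3P K : K^T = - K -> exists a b c, K = skew3 a b c.
Proof.
move=> skK; have [f Kf] := mx3_fun K.
exists (f 2%N 1%N), (f 0%N 2%N), (f 1%N 0%N).
apply/matrixP => i j; have := congr1 (fun M : 'M[R]_3 => M i j) skK.
by move: i j => -[[|[|[|//]]] ?] -[[|[|[|//]]] ?]; rewrite !(mxE, Kf) /=; lra.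
Qed.

Lemma cayley3_den_gt0 a b c t : 0 < 1 + t ^+ 2 * (a ^+ 2 + b ^+ 2 + c ^+ 2).
Proof. by rewrite ltr_pwDl // mulr_ge0 // ?addr_ge0 ?sqr_ge0. Qed.

Lemma unitmx_1D_skew3 a b c t : 1%:M + t *: skew3 a b c \in unitmx.
Proof.
have d0 := lt0r_neq0 (cayley3_den_gt0 a b c t).
pose K := skew3 a b c.
suff /mulmx1_unit[] : (1%:M + t *: K) *m
    ((1 + t ^+ 2 * (a ^+ 2 + b ^+ 2 + c ^+ 2))^-1 *:
     (1%:M - t *: K + t ^+ 2 *: (K *m K + (a ^+ 2 + b ^+ 2 + c ^+ 2)%:M)))
  = 1%:M by [].
by rewrite /K; mx3_ext; field.
Qed.

Lemma cayley3_mul a b c t :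
  cayley3 a b c t *m (1%:M + t *: skew3 a b c) = 1%:M - t *: skew3 a b c.
Proof.
have d0 := lt0r_neq0 (cayley3_den_gt0 a b c t).
by rewrite /cayley3; mx3_ext; field.
Qed.

Lemma cayley3_SO3 a b c t : SO3set (cayley3 a b c t).
Proof.
apply: (@cayley_orthogonal _ _ (t *: skew3 a b c)).
- by rewrite linearZ /= skew3_tr scalerN.
- exact: unitmx_1D_skew3.
- exact: cayley3_mul.
Qed.

Lemma cayley3_t0 a b c : cayley3 a b c 0 = 1%:M.
Proof. by rewrite /cayley3 mulr0 mul0r scale0r subr0. Qed.

Lemma cayley3_axis0 t : cayley3 0 0 0 t = 1%:M.
Proof.
have d0 := lt0r_neq0 (cayley3_den_gt0 0 0 0 t).
by rewrite /cayley3; mx3_ext; field.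
Qed.

Lemma SO3_cayley3 X : SO3set X -> 1%:M + X \in unitmx ->
  exists a b c, X = cayley3 a b c 1.
Proof.
move=> SX uX.
have [K [skK uK XK]] := orthogonal_cayley (SO3set_trmx_mulmx SX) uX.
have [a [b [c defK]]] := skew3P skK.
exists a, b, c; apply: (can_inj (mulmxK uK)).
by rewrite XK defK -[skew3 a b c]scale1r cayley3_mul.
Qed.

Definition quarter_turn (v : R * R * R) : 'M[R]_3 :=
  let: (a, b, c) := v in cayley3 a b c 1.

Definition unit_axes : seq (R * R * R) :=
  [:: (1, 0, 0); (-1, 0, 0); (0, 1, 0); (0, -1, 0); (0, 0, 1); (0, 0, -1)].

Lemma sum_quarter_turns : \sum_(v <- unit_axes) quarter_turn v = 2%:M.
Proof. by rewrite !big_cons big_nil /quarter_turn /cayley3; mx3_ext; field. Qed.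

(* If 1 + X is singular then tr X = -1, and since the quarter turns sum to
   2, some quarter turn Q has tr (Q^T X) <> -1, i.e. 1 + Q^T X is invertible. *)
Lemma SO3_cayley3_factor X : SO3set X ->
  exists a b c a' b' c', X = cayley3 a b c 1 *m cayley3 a' b' c' 1.
Proof.
move=> SX; have [uX|nuX] := boolP (1%:M + X \in unitmx).
  have [a' [b' [c' ->]]] := SO3_cayley3 SX uX.
  by exists 0, 0, 0, a', b', c'; rewrite cayley3_axis0 mul1mx.
have trX : \tr X = -1 by apply/eqP; move: nuX; rewrite SO3_unitmx1D // negbK.
have [[[a b] c] _ trQX] : exists2 v, v \in unit_axes &
    \tr ((quarter_turn v)^T *m X) != -1.
  apply/hasP; apply: contraT; rewrite -all_predC => /allP /= allQX.
  have : \sum_(v <- unit_axes) \tr ((quarter_turn v)^T *m X) = 2 * \tr X.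
    rewrite -raddf_sum -mulmx_suml -raddf_sum sum_quarter_turns /=.
    by rewrite tr_scalar_mx mul_scalar_mx mxtraceZ.
  rewrite big_seq (eq_bigr (fun=> -1)); last first.
    by move=> v /allQX; rewrite negbK => /eqP.
  by rewrite -big_seq !big_cons big_nil trX; lra.
have SQ : SO3set (quarter_turn (a, b, c)) by apply: cayley3_SO3.
have SQX := SO3set_mul (SO3set_tr SQ) SX.
have [a' [b' [c' QX]]] : exists a' b' c',
    (quarter_turn (a, b, c))^T *m X = cayley3 a' b' c' 1.
  by apply: SO3_cayley3; rewrite ?SO3_unitmx1D.
exists a, b, c, a', b', c'; rewrite -QX mulmxA.
by have [-> _] := SQ; rewrite mul1mx.
Qed.

End cayley3.

Section matrix_continuity.
Variables (R : realType) (T : topologicalType).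

Lemma continuous_mx_entries m n (F : T -> 'M[R]_(m, n)) :
  (forall i j, continuous (fun x => F x i j)) -> continuous F.
Proof.
move=> Fc; rewrite (_ : F = fun x => \sum_i \sum_j F x i j *: delta_mx i j).
  apply: (continuous_big add_continuous) => i _.
  apply: (continuous_big add_continuous) => j _ x.
  exact/continuousZr_tmp/Fc.
by apply: funext => x; exact: matrix_sum_delta.
Qed.

Lemma continuous_mx_entry m n (F : T -> 'M[R]_(m, n)) i j :
  continuous F -> continuous (fun x => F x i j).
Proof.
by move=> Fc x; exact: (continuous_comp (Fc x) (@coord_continuous R m n i j (F x))).
Qed.

Lemma continuous_trmx m n (F : T -> 'M[R]_(m, n)) :
  continuous F -> continuous (fun x => (F x)^T).
Proof.
move=> Fc; apply: continuous_mx_entries => i j.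
under eq_fun do rewrite mxE; exact: continuous_mx_entry.
Qed.

Lemma continuous_mulmx m n p (F : T -> 'M[R]_(m, n)) (G : T -> 'M[R]_(n, p)) :
  continuous F -> continuous G -> continuous (fun x => F x *m G x).
Proof.
move=> Fc Gc; apply: continuous_mx_entries => i j.
under eq_fun do rewrite mxE.
apply: (continuous_big add_continuous) => k _ x.
by apply: continuousM; apply: continuous_mx_entry.
Qed.

End matrix_continuity.

Section finite_range.
Variable R : realType.

Lemma infinite_itvcc (a b : R) : a < b -> infinite_set `[a, b].
Proof.
move=> ab; pose u (k : nat) := a + (b - a) / k.+1%:R.
have ba0 : 0 < b - a by rewrite subr_gt0.
have uab : u @` setT `<=` `[a, b].
  move=> _ [k _ <-]; have k0 : 0 < k.+1%:R :> R by rewrite ltr0Sn.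
  rewrite /= in_itv /= /u lerDl divr_ge0 ?(ltW ba0, ltW k0) //= -lerBrDl.
  by rewrite ler_pdivrMr // ler_peMr ?(ltW ba0) // ler1n.
have uinj : {in setT &, injective u}.
  move=> k l _ _ /addrI /(mulfI (lt0r_neq0 ba0)) /invr_inj /eqP.
  by rewrite eqr_nat eqSS => /eqP.
move/(sub_finite_set uab); rewrite (eq_finite_set (inj_card_eq uinj)).
exact: infinite_nat.
Qed.

Lemma continuous_finite_range_cst (f : R -> R) :
  continuous f -> finite_set (range f) -> forall a b, f a = f b.
Proof.
move=> fc fin; suff le_cst a b : a <= b -> f a = f b.
  by move=> a b; case: (leP a b) => [/le_cst|/ltW/le_cst/esym].
move=> ab; apply: contrapT => fab.
have lohi : Num.min (f a) (f b) < Num.max (f a) (f b).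
  by case: (ltgtP (f a) (f b)) fab => // ->.
apply: (infinite_itvcc lohi); apply: sub_finite_set fin => v.
rewrite /= in_itv /= => /(IVT ab (continuous_subspaceT fc))[c _ <-].
by exists c.
Qed.

Lemma continuous_mx_finite_range_cst m n (f : R -> 'M[R]_(m, n)) :
  continuous f -> finite_set (range f) -> forall a b, f a = f b.
Proof.
move=> fc fin a b; apply/matrixP => i j.
apply: (continuous_finite_range_cst (continuous_mx_entry (i := i) (j := j) fc) _ a b).
apply: (sub_finite_set _ (finite_image (fun M : 'M[R]_(m, n) => M i j) fin)).
by move=> _ [x _ <-]; exists (f x); first by exists x.
Qed.

End finite_range.

Section SO3_topology.
Variable R : realType.

Lemma continuous_cayley3 (a b c : R) : continuous (cayley3 a b c).
Proof.
pose d (x : R) := 1 + x ^+ 2 * (a ^+ 2 + b ^+ 2 + c ^+ 2).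
have dc : continuous d.
  move=> x; apply: cvgD; first exact: cvg_cst.
  by apply: cvgMr_tmp; rewrite expr2; apply: cvgM; exact: cvg_id.
move=> t; rewrite /cayley3.
apply: cvgB; first exact: cvg_cst.
apply: cvgZ; last by apply: cvgB; [exact: cvg_cst | exact: cvgZr_tmp cvg_id].
apply: cvgM; first by apply: cvgM; [exact: cvg_cst | exact: cvg_id].
exact: (continuousV (s := d) (lt0r_neq0 (cayley3_den_gt0 a b c t)) (dc t)).
Qed.

Lemma SO3set_val (x : SO3 R) : SO3set (val x).
Proof. exact: set_mem (valP x). Qed.

Lemma continuous_finite_range_SO3_cst m n (F : SO3 R -> 'M[R]_(m, n)) :
  continuous F -> finite_set (range F) -> forall x y, F x = F y.
Proof.
move=> Fc fin.
have right_cayley3 x y a b c : val y = val x *m cayley3 a b c 1 -> F x = F y.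
  move=> xy; pose gam t : SO3 R := exist _ (val x *m cayley3 a b c t)
    (mem_set (SO3set_mul (SO3set_val x) (cayley3_SO3 a b c t))).
  have gamc : continuous gam.
    apply: continuous_comp_initial; apply: continuous_mulmx.
      exact: cst_continuous.
    exact: continuous_cayley3.
  have <- : gam 0 = x by apply: val_inj; rewrite /= cayley3_t0 mulmx1.
  have <- : gam 1 = y by apply: val_inj.
  apply: (continuous_mx_finite_range_cst (f := F \o gam)).
    by move=> t; apply: continuous_comp (gamc t) (Fc (gam t)).
  by apply: sub_finite_set fin => _ [t _ <-]; exists (gam t).
move=> x y.
have [a [b [c [a' [b' [c' xy]]]]]] :=
  SO3_cayley3_factor (SO3set_mul (SO3set_tr (SO3set_val x)) (SO3set_val y)).
pose z : SO3 R := exist _ (val x *m cayley3 a b c 1)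
  (mem_set (SO3set_mul (SO3set_val x) (cayley3_SO3 a b c 1))).
rewrite (right_cayley3 x z a b c) //; apply: (right_cayley3 z y a' b' c').
have [xxt _] := SO3set_val x.
by rewrite /= -mulmxA -xy mulmxA xxt mul1mx.
Qed.

Lemma pG_eqP (G : finSubgroupSO3 R) (x y : SO3 R) :
  pG G x = pG G y <-> fsg_set G (invmx (val x) *m val y).
Proof.
split=> [/(eqquotP {eq_quot coset_equiv G})/asboolP //|Gxy].
by apply/(eqquotP {eq_quot coset_equiv G}); apply/asboolP.
Qed.

Lemma continuous_section_pG_trivial (G : finSubgroupSO3 R)
    (s : SO3modG G -> SO3 R) :
  continuous s -> (forall Q, pG G (s Q) = Q) -> forall A, fsg_set G A -> A = 1%:M.
Proof.
move=> sc s_sec A GA.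
pose F (x : SO3 R) := (val x)^T *m val (s (pG G x)).
have FG x : fsg_set G (F x).
  move: (esym (s_sec (pG G x))) => /pG_eqP.
  by rewrite invmx_SO3set //; exact: SO3set_val.
have valc : continuous (fun x : SO3 R => val x) by exact: initial_continuous.
have pGc : continuous (pG G) by exact: pi_continuous.
have Fc : continuous F.
  apply: continuous_mulmx; first exact/continuous_trmx/valc.
  by move=> x; exact: continuous_comp (continuous_comp (pGc x) (sc _)) (valc _).
have finF : finite_set (range F).
  by apply: (sub_finite_set _ (fsg_finite G)) => _ [x _ <-]; exact: FG.
pose one : SO3 R := exist _ 1%:M (mem_set (fsg_sub (fsg_one G))).
pose a : SO3 R := exist _ A (mem_set (fsg_sub GA)).
have pGa : pG G a = pG G one by apply/pG_eqP; rewrite mulmx1; exact: fsg_inv.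
have := continuous_finite_range_SO3_cst Fc finF a one.
rewrite /F pGa /= trmx1 => AtS.
have At1 : A^T = 1%:M by apply: (can_inj (mulmxK (SO3_unit (s (pG G one))))).
by rewrite -[A]trmxK At1 trmx1.
Qed.

End SO3_topology.

Theorem corollary10 (R : realType) (G : finSubgroupSO3 R) (n : nat)
    (g : SO3 R -> 'rV[R]_n) :
  (exists A : 'M[R]_3, fsg_set G A /\ A <> 1%:M) ->
  embedding g ->
  ~ (exists f : SO3modG G -> set_type (range g),
       continuous f /\
       (forall (Q : SO3modG G) (x : SO3 R), g x = val (f Q) -> pG G x = Q)).
Proof.
move=> [A [GA A1]] [_ _ [h [hc hg]]] [f [fc fsec]].
apply/A1/(continuous_section_pG_trivial (s := h \o f)) => //.
- by move=> Q; exact: continuous_comp (fc Q) (hc _).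
- by move=> Q; apply: fsec; rewrite /= hg.
Qed.
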